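(* Let $F$ be the free group on the totally ordered set $X=\{x_1<\dots<x_m\}$, and let $n\ge1$, $c\ge1$ with $c\ge n-1$. Let $$W=\{[b,a]:\ b,a \text{ basic commutators on } X,\ b>a,\ wt(b)\ge c+n+1,\ wt(a)\ge c+1,\ wt(b)+wt(a)\le 2c+2n+1\}.$$ Then $$[\gamma_{c+n+1}(F),\gamma_{c+1}(F)]\,\gamma_{2c+2n+2}(F)=\langle W\rangle\,\gamma_{2c+2n+2}(F),$$ i.e. $[\gamma_{c+n+1}(F),\gamma_{c+1}(F)]\equiv\langle W\rangle \pmod{\gamma_{2c+2n+2}(F)}$.
   Context: $\gamma_k(F)$ is the $k$-th term of the lower central series of $F$. Basic commutators on a totally ordered set $X$ of free generators are defined inductively with their weights $wt$: the elements of $X$ are the basic commutators of weight 1, ordered as in $X$. Assuming basic commutators of weight $<k$ have been defined and ordered, a commutator $[b,a]$ is a basic commutator of weight $k$ if $b,a$ are basic commutators with $wt(a)+wt(b)=k$, $b>a$, and, if $b=[b_1,b_2]$ (with $b_1,b_2$ basic), then $b_2\le a$. The ordering is then extended to weight $k$ so that all basic commutators of smaller weight precede those of weight $k$. *)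

(* The free group F on X = {x_0 < ... < x_(m-1)}
   (indexed by 'I_m with its natural order) is modelled concretely by freely
   reduced words; subsets of F are Prop-valued predicates on words. *)
From mathcomp Require Import all_boot.
Set Implicit Arguments. Unset Strict Implicit. Unset Printing Implicit Defensive.

Section FreeGroup.
Variable m : nat.

(* a letter (i, false) is x_i, (i, true) is x_i^-1 *)
Definition letter := ('I_m * bool)%type.
Definition word := seq letter.

Definition push (l : letter) (w : word) : word :=
  match w with
  | l' :: w' => if (l'.1 == l.1) && (l'.2 != l.2) then w' else l :: w
  | [::] => [:: l]
  end.

Definition reduce (w : word) : word := foldr push [::] w.

Definition fg1 : word := [::].
Definition fgmul (u v : word) : word := reduce (u ++ v).
Definition fginv (u : word) : word := rev (map (fun l : letter => (l.1, ~~ l.2)) u).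
Definition fggen (i : 'I_m) : word := [:: (i, false)].
Definition fgcomm (a b : word) : word :=
  fgmul (fgmul (fginv a) (fginv b)) (fgmul a b).

Definition fgset := word -> Prop.
Definition fgset_eq (A B : fgset) : Prop := forall w, A w <-> B w.

Inductive fgspan (S : fgset) : fgset :=
| span1 : fgspan S fg1
| spanS s : S s -> fgspan S (reduce s)
| spanV u : fgspan S u -> fgspan S (fginv u)
| spanM u v : fgspan S u -> fgspan S v -> fgspan S (fgmul u v).

Definition Ftot : fgset := fgspan (fun _ => True).

Definition fgsetmul (A B : fgset) : fgset :=
  fun w => exists a b, [/\ A a, B b & w = fgmul a b].

Definition fgcommg (A B : fgset) : fgset :=
  fgspan (fun w => exists a b, [/\ A a, B b & w = fgcomm a b]).

(* lower central series: gamma_1 = F, gamma_(k+1) = [gamma_k, F]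
   (gamma_0 := F by convention, unused) *)
Fixpoint gamma (k : nat) : fgset :=
  match k with
  | 0 => Ftot
  | 1 => Ftot
  | k'.+1 => fgcommg (gamma k') Ftot
  end.

(* formal commutators on X: Node b a stands for [b, a] *)
Inductive ctree : Type :=
| Leaf of 'I_m
| Node of ctree & ctree.

Fixpoint wt (t : ctree) : nat :=
  match t with Leaf _ => 1 | Node b a => wt b + wt a end.

Fixpoint ceval (t : ctree) : word :=
  match t with Leaf i => fggen i | Node b a => fgcomm (ceval b) (ceval a) end.

Fixpoint basic (lt : ctree -> ctree -> Prop) (t : ctree) : Prop :=
  match t with
  | Leaf _ => True
  | Node b a =>
      [/\ basic lt b, basic lt a, lt a b &
          match b with Leaf _ => True | Node _ b2 => b2 = a \/ lt b2 a end]
  end.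

(* [lt] is an admissible ordering of the basic commutators: a strict total
   order on basic commutators, extending the order of X on weight 1, and in
   which commutators of smaller weight precede those of larger weight.
   (The order among basic commutators of equal weight > 1 is arbitrary.) *)
Definition basic_order (lt : ctree -> ctree -> Prop) : Prop :=
  [/\ (forall i j : 'I_m, lt (Leaf i) (Leaf j) <-> (i < j)%N),
      (forall t, basic lt t -> ~ lt t t),
      (forall t u v, basic lt t -> basic lt u -> basic lt v ->
          lt t u -> lt u v -> lt t v),
      (forall t u, basic lt t -> basic lt u -> t = u \/ lt t u \/ lt u t) &
      (forall t u, basic lt t -> basic lt u -> (wt t < wt u)%N -> lt t u)].

Definition Wset (lt : ctree -> ctree -> Prop) (c n : nat) : fgset :=
  fun w => exists b a,
    [/\ basic lt b, basic lt a & lt a b] /\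
    [/\ (c + n + 1 <= wt b)%N, (c + 1 <= wt a)%N,
        (wt b + wt a <= 2 * c + 2 * n + 1)%N &
        w = ceval (Node b a)].

End FreeGroup.

(* We work in an arbitrary group G generated by x_1, ..., x_m and transport
   the result to the free group, realised as the group of reduced words.
   By the three subgroups lemma [γ_i, γ_j] ≤ γ_(i+j).  Hall's collection
   process (induction on the weight w and, for fixed w, downwards along the
   order of basic commutators, using the Hall-Witt identity modulo γ_(w+1))
   shows that γ_w is generated modulo γ_(w+1) by the basic commutators of
   weight w; iterating, γ_k is generated by γ_N and the basic commutators of
   weight in [k, N).  With N = 2c+2n+2, [γ_(c+n+1), γ_(c+1)] is therefore
   generated by the commutators [b, a] of such basic commutators, which lie
   in W up to inversion or in γ_N, and by their conjugates under γ_(c+1).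
   A conjugate differs from the commutator by an element of
   γ_(3c+n+3) ≤ γ_N: this is where c ≥ n - 1 is used. *)

From HB Require Import structures.
From mathcomp Require Import all_boot zify.
From Stdlib Require Import ClassicalEpsilon.
Set Implicit Arguments. Unset Strict Implicit. Unset Printing Implicit Defensive.

Lemma count_sub_lt (T : eqType) (a1 a2 : pred T) (s : seq T) x :
  {subset a1 <= a2} -> x \in s -> a2 x -> ~~ a1 x -> count a1 s < count a2 s.
Proof.
move=> sub12 + a2x na1x; elim: s => [//|y s IHs]; rewrite inE /= => /orP[/eqP<-|xs].
  by rewrite a2x (negbTE na1x) ltnS sub_count.
rewrite -addnS leq_add ?IHs //; case a1y: (a1 y) => //.
by move: (sub12 _ a1y); rewrite unfold_in => ->.
Qed.

Definition decide (P : Prop) : bool :=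
  if excluded_middle_informative P then true else false.

Lemma decideP (P : Prop) : reflect P (decide P).
Proof. by rewrite /decide; case: excluded_middle_informative => H; constructor. Qed.

Lemma finite_order_ind (T : eqType) (P : T -> Prop) (R : T -> T -> Prop)
    (s : seq T) (Q : T -> Prop) :
  (forall x, P x -> x \in s) ->
  (forall x, P x -> ~ R x x) ->
  (forall x y z, P x -> P y -> P z -> R x y -> R y z -> R x z) ->
  (forall x, P x -> (forall y, P y -> R x y -> Q y) -> Q x) ->
  forall x, P x -> Q x.
Proof.
move=> sP irrR trR IH.
pose above x := count (fun y => decide (P y /\ R x y)) s.
suff ind k x : above x < k -> P x -> Q x by move=> x; apply: (ind (above x).+1).
elim: k x => [//|k IHk] x ltxk Px; apply: IH => // y Py Rxy; apply: IHk => //.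
rewrite -ltnS (leq_trans _ ltxk) // ltnS (count_sub_lt _ (sP y Py)) //.
- move=> z; rewrite !unfold_in => /decideP[Pz Ryz].
  by apply/decideP; split; last exact: trR Rxy Ryz.
- by apply/decideP.
- by apply/negP => /decideP[_ /(irrR _ Py)].
Qed.

Section CtreeEnum.
Variable m : nat.

Fixpoint ctree_eqb (t u : ctree m) : bool :=
  match t, u with
  | Leaf i, Leaf j => i == j
  | Node b a, Node b' a' => ctree_eqb b b' && ctree_eqb a a'
  | _, _ => false
  end.

Lemma ctree_eqP : Equality.axiom ctree_eqb.
Proof.
elim=> [i|b IHb a IHa] [j|b' a'] /=; try by constructor.
  by apply: (iffP eqP) => [->|[]].
apply: (iffP andP) => [[/IHb-> /IHa->] //|[<- <-]].
by split; [apply/IHb | apply/IHa].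
Qed.

HB.instance Definition _ := hasDecEq.Build (ctree m) ctree_eqP.

Lemma wt_gt0 (t : ctree m) : 0 < wt t.
Proof. by elim: t => //= b IHb a _; rewrite addn_gt0 IHb. Qed.

Fixpoint ctrees_upto k : seq (ctree m) :=
  if k is k'.+1 then
    [seq Leaf i | i <- enum 'I_m] ++
    [seq Node b a | b <- ctrees_upto k', a <- ctrees_upto k']
  else [::].

Lemma mem_ctrees_upto k (t : ctree m) : wt t <= k -> t \in ctrees_upto k.
Proof.
elim: k t => [|k IHk] t; first by rewrite leqNgt wt_gt0.
case: t => [i|b a] /= wt_le; rewrite mem_cat; first by rewrite map_f ?mem_enum.
have := wt_gt0 b; have := wt_gt0 a => a_gt0 b_gt0.
by rewrite allpairs_f ?orbT // IHk //; lia.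
Qed.

End CtreeEnum.

Section BasicOrder.
Variables (m : nat) (lt : ctree m -> ctree m -> Prop).
Hypothesis lt_basic : basic_order lt.

Lemma basic_lt_irr t : basic lt t -> ~ lt t t.
Proof. by case: lt_basic => _ + _ _ _; apply. Qed.

Lemma basic_lt_trans t u v : basic lt t -> basic lt u -> basic lt v ->
  lt t u -> lt u v -> lt t v.
Proof. by case: lt_basic => _ _ + _ _; apply. Qed.

Lemma basic_lt_total t u : basic lt t -> basic lt u -> [\/ t = u, lt t u | lt u t].
Proof.
case: lt_basic => _ _ _ + _ => /[apply]/[apply].
by case=> [|[]]; [constructor 1 | constructor 2 | constructor 3].
Qed.

Lemma basic_lt_wt t u : basic lt t -> basic lt u -> wt t < wt u -> lt t u.
Proof. by case: lt_basic => _ _ _ _; apply. Qed.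

Lemma basic_wt_le t u : basic lt t -> basic lt u -> lt t u -> wt t <= wt u.
Proof.
move=> bt bu ltu; rewrite leqNgt; apply/negP => /(basic_lt_wt bu bt) ltut.
exact: basic_lt_irr bt (basic_lt_trans bt bu bt ltu ltut).
Qed.

Lemma basic_down_ind k (Q : ctree m -> Prop) :
  (forall s, basic lt s -> wt s < k ->
     (forall s', basic lt s' -> wt s' < k -> lt s s' -> Q s') -> Q s) ->
  forall s, basic lt s -> wt s < k -> Q s.
Proof.
move=> IH s bs ltsk.
apply: (@finite_order_ind _ (fun t => basic lt t /\ wt t < k) lt (ctrees_upto m k) Q
  _ _ _ _ s (conj bs ltsk)).
- by move=> t [_ /ltnW]; apply: mem_ctrees_upto.
- by move=> t [bt _]; apply: basic_lt_irr.
- by move=> t u v [bt _] [bu _] [bv _]; apply: basic_lt_trans.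
- by move=> t [bt ltk] IHt; apply: IH => // t' bt' ltk'; apply: IHt.
Qed.

End BasicOrder.

(* Left-normalises and cancels adjacent inverse letters: this computes free
   reduction, so it proves every identity valid in all groups. *)
Ltac group_identity :=
  rewrite /commg /conjg ?(invgM, invgK, mulgA) ?(mulgK, mulgVK, mulVg, mulgV, mul1g, mulg1).

Section GroupTheory.
Variable G : groupType.
Local Open Scope group_scope.
Implicit Types x y z : G.

Lemma hall_witt x y z :
  [~ [~ x, y], z ^ x] * [~ [~ z, x], y ^ z] * [~ [~ y, z], x ^ y] = 1.
Proof. by group_identity. Qed.

Lemma commMg x y z : [~ x * y, z] = [~ x, z] ^ y * [~ y, z].
Proof. by group_identity. Qed.

Lemma commgM x y z : [~ x, y * z] = [~ x, z] * [~ x, y] ^ z.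
Proof. by group_identity. Qed.

Lemma commVg x y : [~ x^-1, y] = ([~ x, y] ^ x^-1)^-1.
Proof. by group_identity. Qed.

Lemma commgV x y : [~ x, y^-1] = ([~ x, y] ^ y^-1)^-1.
Proof. by group_identity. Qed.

Lemma conjg_mulR x y : x ^ y = x * [~ x, y].
Proof. by group_identity. Qed.

Lemma commg_conjr x y z :
  [~ x, y ^ z] = [~ x, y] * [~ x, [~ y, z]] ^ [~ x, y] * [~ [~ x, y], [~ y, z]].
Proof. by group_identity. Qed.

Implicit Types (A B H S U : G -> Prop).

Definition sub_set A B := forall x, A x -> B x.
Definition subgroup H :=
  [/\ H 1, forall x, H x -> H x^-1 & forall x y, H x -> H y -> H (x * y)].
Definition conj_closed H := forall x y, H x -> H (x ^ y).

Section SubgroupFacts.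
Variable H : G -> Prop.
Hypothesis groupH : subgroup H.

Lemma group1 : H 1. Proof. by case: groupH. Qed.
Lemma groupV x : H x -> H x^-1. Proof. by case: groupH => _ + _; apply. Qed.
Lemma groupM x y : H x -> H y -> H (x * y). Proof. by case: groupH => _ _; apply. Qed.

Lemma groupVr x : H x^-1 -> H x.
Proof. by move/groupV; rewrite invgK. Qed.

Lemma groupMr x y : H y -> H (x * y) -> H x.
Proof. by move=> Hy Hxy; rewrite -(mulgK y x); apply: groupM => //; apply: groupV. Qed.

Hypothesis conjH : conj_closed H.

Lemma groupRl x y : H x -> H [~ x, y].
Proof. by move=> Hx; rewrite commgEl; apply: groupM; [apply: groupV | apply: conjH]. Qed.

Lemma groupRr x y : H y -> H [~ x, y].
Proof. by move=> Hy; rewrite commgEr; apply: groupM => //; apply/conjH/groupV. Qed.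
End SubgroupFacts.

Inductive generated S : G -> Prop :=
| generated1 : generated S 1
| generatedS s : S s -> generated S s
| generatedV x : generated S x -> generated S x^-1
| generatedM x y : generated S x -> generated S y -> generated S (x * y).

Lemma generated_subgroup S : subgroup (generated S).
Proof. by split; [apply: generated1 | apply: generatedV | apply: generatedM]. Qed.

Lemma generated_min S H : subgroup H -> sub_set S H -> sub_set (generated S) H.
Proof. by case=> H1 HV HM sSH x; elim=> //; auto. Qed.

Lemma generated_mono S U : sub_set S U -> sub_set (generated S) (generated U).
Proof.
move=> sSU; apply: generated_min; first exact: generated_subgroup.
by move=> x /sSU; apply: generatedS.
Qed.

Lemma generated_conj_closed S : conj_closed S -> conj_closed (generated S).
Proof.
move=> conjS x y; elim=> [|s /(conjS _ y)|u _|u v _ Hu _ Hv].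
- by rewrite conj1g; apply: generated1.
- exact: generatedS.
- by rewrite conjVg; apply: generatedV.
- by rewrite conjMg; apply: generatedM.
Qed.

Definition commg_set A B :=
  generated (fun g => exists a b, [/\ A a, B b & g = [~ a, b]]).

Lemma commg_set_min A B H : subgroup H ->
  (forall a b, A a -> B b -> H [~ a, b]) -> sub_set (commg_set A B) H.
Proof. by move=> groupH HR; apply: generated_min => // _ [a [b [Aa Bb ->]]]; apply: HR. Qed.

Lemma commg_set_conj_closed A B :
  conj_closed A -> conj_closed B -> conj_closed (commg_set A B).
Proof.
move=> conjA conjB; apply: generated_conj_closed => _ y [a [b [Aa Bb ->]]].
by exists (a ^ y), (b ^ y); split; [apply: conjA | apply: conjB | apply: conjRg].
Qed.

Lemma commg_generated S U H : subgroup H ->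
  (forall s t, S s -> U t -> H [~ s, t]) ->
  (forall x y z, generated S x -> generated U y ->
     generated S z \/ generated U z -> H [~ x, y] -> H ([~ x, y] ^ z)) ->
  forall x y, generated S x -> generated U y -> H [~ x, y].
Proof.
move=> groupH HR conjH.
have HRl x t : generated S x -> U t -> H [~ x, t].
  move=> Sx Ut; elim: Sx => [|s Ss|u Su IHu|u v Su IHu Sv IHv].
  - by rewrite comm1g; apply: group1.
  - exact: HR.
  - rewrite commVg; apply: (groupV groupH).
    apply: (conjH _ _ _ Su (generatedS Ut)) => //.
    by left; apply: generatedV.
  - rewrite commMg; apply: groupM => //.
    by apply: (conjH _ _ _ Su (generatedS Ut)) => //; left.
move=> x y Sx; elim=> [|t Ut|u Uu IHu|u v Uu IHu Uv IHv].
- by rewrite commg1; apply: group1.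
- exact: HRl.
- rewrite commgV; apply: (groupV groupH).
  by apply: conjH => //; right; apply: generatedV.
- by rewrite commgM; apply: groupM => //; apply: conjH => //; right.
Qed.

Lemma commg_generated_normal S U H : subgroup H -> conj_closed H ->
  (forall s t, S s -> U t -> H [~ s, t]) ->
  forall x y, generated S x -> generated U y -> H [~ x, y].
Proof. by move=> groupH conjH HR; apply: commg_generated => // x y z _ _ _; apply: conjH. Qed.

Definition setmul A B := fun g => exists a b, [/\ A a, B b & g = a * b].

Lemma setmul_subgroup A B : subgroup A -> subgroup B -> conj_closed B ->
  subgroup (setmul A B).
Proof.
move=> groupA groupB conjB; split.
- by exists 1, 1; split; rewrite ?mulg1 //; apply: group1.
- move=> _ [a [b [Aa Bb ->]]]; exists a^-1, ((b^-1) ^ a^-1); split.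
  + exact: groupV.
  + by apply/conjB/(groupV groupB).
  + by group_identity.
- move=> _ _ [a [b [Aa Bb ->]]] [a' [b' [Aa' Bb' ->]]].
  exists (a * a'), (b ^ a' * b'); split.
  + exact: groupM.
  + by apply: groupM => //; apply: conjB.
  + by group_identity.
Qed.

Lemma three_subgroups A B C H : subgroup H -> conj_closed H ->
  conj_closed A -> conj_closed B -> conj_closed C ->
  (forall a b c, A a -> B b -> C c -> H [~ [~ a, b], c]) ->
  (forall a b c, A a -> B b -> C c -> H [~ [~ b, c], a]) ->
  forall a b c, A a -> B b -> C c -> H [~ [~ c, a], b].
Proof.
move=> groupH conjH conjA conjB conjC HabC HbcA a b c Aa Bb Cc.
have := hall_witt c a (b ^ c^-1); rewrite conjgKV -mulgA => hw.
apply: (groupMr groupH (y := [~ [~ b ^ c^-1, c], a ^ b ^ c^-1] * [~ [~ a, b ^ c^-1], c ^ a])).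
  by apply: (groupM groupH); [apply: HbcA | apply: HabC]; auto.
by rewrite hw; apply: group1.
Qed.

Fixpoint lcs k : G -> Prop :=
  match k with
  | 0 | 1 => fun _ => True
  | k'.+1 => commg_set (lcs k') (fun _ => True)
  end.

Lemma lcs_subgroup k : subgroup (lcs k).
Proof. by case: k => [|[|k]] //; apply: generated_subgroup. Qed.

Lemma lcs_conj_closed k : conj_closed (lcs k).
Proof. by elim: k => [|[|k] IHk] //; apply: commg_set_conj_closed. Qed.

Lemma lcs_commgl k x y : 0 < k -> lcs k x -> lcs k.+1 [~ x, y].
Proof. by case: k => [|k] // _ Hx; apply: generatedS; exists x, y. Qed.

Lemma lcs_succ_sub k : sub_set (lcs k.+1) (lcs k).
Proof.
case: k => [|k] //; apply: commg_set_min => [|x y Hx _]; first exact: lcs_subgroup.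
by apply: (groupRl (lcs_subgroup k.+1) (@lcs_conj_closed k.+1)); exact: Hx.
Qed.

Lemma lcs_sub i j : i <= j -> sub_set (lcs j) (lcs i).
Proof.
elim: j => [|j IHj]; first by rewrite leqn0 => /eqP ->.
by rewrite leq_eqVlt => /orP[/eqP-> //|/IHj sub_ij] x /lcs_succ_sub /sub_ij.
Qed.

(* Induction on j; the inductive step is the three subgroups lemma for
   [~ lcs i, [~ lcs j.+1, G]]. *)
Lemma lcs_commg i j x y : 0 < i -> 0 < j -> lcs i x -> lcs j y -> lcs (i + j) [~ x, y].
Proof.
move=> + j_gt0; elim: j j_gt0 i x y => [//|[|j] IHj] _ i x y i_gt0 Hx Hy.
  by rewrite addn1; apply: lcs_commgl.
apply: (commg_generated_normal (lcs_subgroup _) (@lcs_conj_closed _) _ (generatedS Hx) Hy).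
move=> a _ Ha [b [c [Hb _ ->]]].
rewrite -invgR; apply: (groupV (lcs_subgroup _)).
apply: (three_subgroups (A := fun _ => True) (B := lcs i) (C := lcs j.+1)) => //;
  try exact: lcs_subgroup; try exact: (@lcs_conj_closed _).
- move=> u v w _ Hv Hw; rewrite -addSnnS; apply: IHj => //.
  by rewrite -invgR; apply/(groupV (lcs_subgroup _))/lcs_commgl.
- move=> u v w _ Hv Hw; rewrite addnS; apply: lcs_commgl; first by rewrite addn_gt0 i_gt0.
  exact: IHj.
Qed.

Lemma lcs_commg_conjr a b x y z : 0 < a -> 0 < b -> lcs a x -> lcs b y ->
  lcs (a + b).+1 ([~ x, y]^-1 * [~ x, y ^ z]).
Proof.
move=> a_gt0 b_gt0 Hx Hy; rewrite commg_conjr -mulgA mulKg.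
have Hyz : lcs b.+1 [~ y, z] by apply: lcs_commgl.
apply: (groupM (lcs_subgroup _)).
  by apply: lcs_conj_closed; rewrite -addnS; apply: lcs_commg.
apply: (lcs_sub (j := a + b + b.+1)); first by lia.
by apply: lcs_commg => //; [lia | apply: lcs_commg].
Qed.

(* Hall-Witt modulo lcs (p + q + r).+1: conjugating the outer argument of a
   commutator of weight p + q + r only changes it in higher weight. *)
Lemma hall_witt_lcs H p q r x y z : subgroup H -> conj_closed H ->
  0 < p -> 0 < q -> 0 < r -> sub_set (lcs (p + q + r).+1) H ->
  lcs p x -> lcs q y -> lcs r z ->
  H [~ [~ x, z], y] -> H [~ [~ y, z], x] -> H [~ [~ x, y], z].
Proof.
move=> groupH conjH p_gt0 q_gt0 r_gt0 lcsH Hx Hy Hz Hxzy Hyzx.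
have congr u v w t k1 k2 k3 : 0 < k1 -> 0 < k2 -> 0 < k3 -> k1 + k2 + k3 = p + q + r ->
    lcs k1 u -> lcs k2 v -> lcs k3 w -> H [~ [~ u, v], w] <-> H [~ [~ u, v], w ^ t].
  move=> k1_gt0 k2_gt0 k3_gt0 sum_k Hu Hv Hw.
  have He : H ([~ [~ u, v], w]^-1 * [~ [~ u, v], w ^ t]).
    apply: lcsH; rewrite -sum_k.
    by apply: lcs_commg_conjr (lcs_commg _ _ Hu Hv) Hw; rewrite ?addn_gt0 ?k1_gt0.
  split=> [Huvw | Huvwt]; last by apply: (groupMr groupH He); rewrite mulVKg.
  by rewrite -(mulVKg [~ [~ u, v], w] [~ _, w ^ t]); apply: (groupM groupH).
have Hzxy : H [~ [~ z, x], y].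
  by rewrite -[[~ z, x]]invgR commVg; apply/(groupV groupH)/conjH.
have := hall_witt x y z; rewrite -mulgA => /mulg1_eq hw.
apply/(congr x y z x p q r) => //.
apply: (groupVr groupH); rewrite hw; apply: (groupM groupH).
- by apply/(congr z x y z r p q) => //; lia.
- by apply/(congr y z x y q r p) => //; lia.
Qed.

Section Collection.
Variables (m : nat) (gen : 'I_m -> G) (lt : ctree m -> ctree m -> Prop).
Hypothesis lt_basic : basic_order lt.

Fixpoint cval (t : ctree m) : G :=
  match t with Leaf i => gen i | Node b a => [~ cval b, cval a] end.

Lemma cval_lcs t : lcs (wt t) (cval t).
Proof. by elim: t => [i|b IHb a IHa] //=; apply: lcs_commg; rewrite ?wt_gt0. Qed.

Definition basic_wt k x := exists t, [/\ basic lt t, wt t = k & x = cval t].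

Definition basic_lcs k := generated (fun x => basic_wt k x \/ lcs k.+1 x).

Lemma basic_lcs_subgroup k : subgroup (basic_lcs k).
Proof. exact: generated_subgroup. Qed.

Lemma basic_lcs_sub k : 0 < k -> sub_set (basic_lcs k) (lcs k).
Proof.
move=> k_gt0; apply: generated_min; first exact: lcs_subgroup.
move=> x [[t [_ wt_t ->]]|]; last exact: lcs_succ_sub.
by rewrite -wt_t; apply: cval_lcs.
Qed.

Lemma lcs_succ_sub_basic_lcs k : sub_set (lcs k.+1) (basic_lcs k).
Proof. by move=> x Hx; apply: generatedS; right. Qed.

Lemma basic_lcs_conj_closed k : 0 < k -> conj_closed (basic_lcs k).
Proof.
move=> k_gt0 x y Hx; rewrite conjg_mulR; apply: (groupM (basic_lcs_subgroup k)) => //.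
by apply/lcs_succ_sub_basic_lcs/lcs_commgl/basic_lcs_sub.
Qed.

Lemma basic_lcs_node t s : basic lt (Node t s) ->
  basic_lcs (wt t + wt s) [~ cval t, cval s].
Proof. by move=> bts; apply: generatedS; left; exists (Node t s). Qed.

Lemma basic_lcs_commgl k q w x y : 0 < k -> 0 < q -> k + q = w -> lcs q y ->
  (forall d, basic_wt k d -> basic_lcs w [~ d, y]) ->
  basic_lcs k x -> basic_lcs w [~ x, y].
Proof.
move=> k_gt0 q_gt0 sum_w Hy Hd Hx.
apply: (commg_generated_normal (U := eq y) (basic_lcs_subgroup _)
  (basic_lcs_conj_closed _) _ Hx (generatedS (erefl y))); first by lia.
move=> u _ [Hu|Hu] <-; first exact: Hd.
by apply: lcs_succ_sub_basic_lcs; rewrite -sum_w -addSn; apply: lcs_commg.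
Qed.

Section CollectionStep.
Variable w : nat.
Hypothesis IHw : forall w', w' < w -> forall t s, basic lt t -> basic lt s ->
  wt t + wt s = w' -> basic_lcs w' [~ cval t, cval s].

(* Downward induction along the ordering: a non-basic [~ [~ t1, t2], s] with
   s < t2 is rewritten by Hall-Witt into [~ [~ t1, s], t2] and [~ [~ t2, s], t1],
   whose inner commutators are collected at lower weight and whose outer
   arguments exceed s. *)
Lemma basic_lcs_commg_lt s : basic lt s -> wt s < w ->
  forall t, basic lt t -> lt s t -> wt t + wt s = w -> basic_lcs w [~ cval t, cval s].
Proof.
move: s; apply: (basic_down_ind lt_basic) => s bs ws IHs [i|t1 t2] bt lst sum_w.
  by rewrite -sum_w; apply: basic_lcs_node.
have [b1 b2 l21] : [/\ basic lt t1, basic lt t2 & lt t2 t1] by case: bt.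
have [e|l2s|ls2] := basic_lt_total lt_basic b2 bs.
- by rewrite -sum_w; apply: basic_lcs_node; split=> //; left.
- by rewrite -sum_w; apply: basic_lcs_node; split=> //; right.
move: sum_w => /= sum_w; have wt21 := basic_wt_le lt_basic b2 b1 l21.
have := wt_gt0 t1; have := wt_gt0 t2; have := wt_gt0 s => s_gt0 t2_gt0 t1_gt0.
apply: (hall_witt_lcs (basic_lcs_subgroup w) (basic_lcs_conj_closed _) _ _ _ _
  (cval_lcs t1) (cval_lcs t2) (cval_lcs s)) => //; first by lia.
  by rewrite sum_w; apply: lcs_succ_sub_basic_lcs.
- apply: (basic_lcs_commgl (k := wt t1 + wt s) (q := wt t2)) => //; try lia.
  + exact: cval_lcs.
  + move=> _ [d [bd wt_d ->]]; apply: IHs => //; try lia.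
    by apply: (basic_lt_wt lt_basic) => //; lia.
  + by apply: IHw => //; lia.
- apply: (basic_lcs_commgl (k := wt t2 + wt s) (q := wt t1)) => //; try lia.
  + exact: cval_lcs.
  + move=> _ [d [bd wt_d ->]].
    have [->|ld1|l1d] := basic_lt_total lt_basic bd b1.
    * by rewrite commgg; apply: group1 (basic_lcs_subgroup _).
    * rewrite -invgR; apply: (groupV (basic_lcs_subgroup _)).
      by apply: IHs => //; try lia; apply: (basic_lt_wt lt_basic) => //; lia.
    * by apply: IHs => //; try lia; apply: (basic_lt_trans lt_basic) ls2 l21.
  + by apply: IHw => //; lia.
Qed.
End CollectionStep.

Lemma basic_lcs_commg w t s : basic lt t -> basic lt s -> wt t + wt s = w ->
  basic_lcs w [~ cval t, cval s].
Proof.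
elim/ltn_ind: w t s => w IHw t s bt bs sum_w.
have := wt_gt0 t; have := wt_gt0 s => s_gt0 t_gt0.
have [->|lts|lst] := basic_lt_total lt_basic bt bs.
- by rewrite commgg; apply: group1 (basic_lcs_subgroup _).
- rewrite -invgR; apply: (groupV (basic_lcs_subgroup _)).
  by apply: basic_lcs_commg_lt IHw _ _ _ _ _ _ _ => //; lia.
- by apply: basic_lcs_commg_lt IHw _ _ _ _ _ _ _ => //; lia.
Qed.

Hypothesis gen_generates : forall x, generated (fun y => exists i, y = gen i) x.

Lemma lcs_sub_basic_lcs k : 0 < k -> sub_set (lcs k) (basic_lcs k).
Proof.
elim: k => [//|[|k] IHk] _.
  move=> x _; apply: (generated_min (basic_lcs_subgroup 1) _ (gen_generates x)).
  by move=> _ [i ->]; apply: generatedS; left; exists (Leaf i).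
apply: commg_set_min (basic_lcs_subgroup _) _ => x y Hx _.
apply: (commg_generated_normal (basic_lcs_subgroup _) (basic_lcs_conj_closed _) _
  (IHk isT x Hx) (gen_generates y)) => // u _ [[t [bt wt_t ->]] | Hu] [i ->].
  by apply: (basic_lcs_commg (s := Leaf i)) => //=; rewrite wt_t addn1.
by apply/lcs_succ_sub_basic_lcs/lcs_commgl.
Qed.

Definition basic_range k N x :=
  (exists t, [/\ basic lt t, k <= wt t, wt t < N & x = cval t]) \/ lcs N x.

Lemma lcs_sub_basic_range k N : 0 < k -> k <= N ->
  sub_set (lcs k) (generated (basic_range k N)).
Proof.
move Ed : (N - k) => d; elim: d k Ed => [|d IHd] k Ed k_gt0 le_kN x Hx.
  by apply: generatedS; right; have -> : N = k by lia.
apply: (generated_min (generated_subgroup _) _ (lcs_sub_basic_lcs k_gt0 Hx)).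
move=> y [[t [bt wt_t ->]] | Hy].
  by apply: generatedS; left; exists t; split => //; lia.
have /generated_mono : sub_set (basic_range k.+1 N) (basic_range k N).
  by move=> z [[t [bt ? ? ->]] | Hz]; [left; exists t; split => //; lia | right].
by apply; apply: IHd Hy => //; lia.
Qed.

Lemma basic_range_sub_lcs k N : k <= N -> sub_set (generated (basic_range k N)) (lcs k).
Proof.
move=> le_kN; apply: generated_min; first exact: lcs_subgroup.
move=> x [[t [_ le_k _ ->]] | HN]; last exact: lcs_sub le_kN _ HN.
exact: lcs_sub le_k _ (cval_lcs t).
Qed.

Section CommutatorOfTerms.
Variables c n : nat.
Hypotheses (n_gt0 : 0 < n) (c_gt0 : 0 < c) (n_le_c1 : n - 1 <= c).
Let N := (2 * c + 2 * n + 2)%N.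

Definition W x := exists b a,
  [/\ basic lt b, basic lt a & lt a b] /\
  [/\ c + n + 1 <= wt b, c + 1 <= wt a, (wt b + wt a <= 2 * c + 2 * n + 1)%N &
      x = cval (Node b a)].

Lemma commg_lcs_sub_W :
  sub_set (commg_set (lcs (c + n + 1)) (lcs (c + 1))) (generated (fun x => W x \/ lcs N x)).
Proof.
pose H := generated (fun x => W x \/ lcs N x).
have groupH : subgroup H by apply: generated_subgroup.
have lcsH : sub_set (lcs N) H by move=> x Hx; apply: generatedS; right.
have basic_pair t s : basic lt t -> basic lt s -> lt s t ->
    c + n + 1 <= wt t -> c + 1 <= wt s -> H [~ cval t, cval s].
  move=> bt bs lst le_t le_s; have [le_N | lt_N] := leqP (wt t + wt s) (2 * c + 2 * n + 1)%N.
    by apply: generatedS; left; exists t, s.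
  by apply/lcsH/(lcs_sub _ (cval_lcs (Node t s))) => /=; rewrite /N; lia.
have range1 : sub_set (lcs (c + n + 1)) (generated (basic_range (c + n + 1) N)).
  by apply: lcs_sub_basic_range; rewrite /N; lia.
have range2 : sub_set (lcs (c + 1)) (generated (basic_range (c + 1) N)).
  by apply: lcs_sub_basic_range; rewrite /N; lia.
apply: (commg_set_min groupH) => x y /range1 Rx /range2 Ry.
apply: (commg_generated groupH _ _ Rx Ry).
- move=> u v [[t [bt le_t _ ->]] | HtN] [[s [bs le_s _ ->]] | HsN];
    try by [apply/lcsH/(groupRl (lcs_subgroup N) (@lcs_conj_closed N))
           | apply/lcsH/(groupRr (lcs_subgroup N) (@lcs_conj_closed N))].
  have [->|lts|lst] := basic_lt_total lt_basic bt bs.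
  + by rewrite commgg; apply: (group1 groupH).
  + rewrite -invgR; apply: (groupV groupH); apply: basic_pair => //.
      by have := basic_wt_le lt_basic bt bs lts; lia.
    by lia.
  + exact: basic_pair.
- move=> g h z Rg Rh Rz Hgh; rewrite conjg_mulR; apply: (groupM groupH) => //.
  have Hg : lcs (c + n + 1) g by apply: basic_range_sub_lcs Rg; rewrite /N; lia.
  have Hh : lcs (c + 1) h by apply: basic_range_sub_lcs Rh; rewrite /N; lia.
  have Hz : lcs (c + 1) z.
    case: Rz => /basic_range_sub_lcs Hz; last by apply: Hz; rewrite /N; lia.
    by apply: (lcs_sub (j := c + n + 1)); [lia | apply: Hz; rewrite /N; lia].
  apply/lcsH/(lcs_sub (j := c + n + 1 + (c + 1) + (c + 1))); first by rewrite /N; lia.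
  by apply: lcs_commg => //; try lia; apply: lcs_commg => //; lia.
Qed.

Theorem setmul_commg_lcs x :
  setmul (commg_set (lcs (c + n + 1)) (lcs (c + 1))) (lcs N) x <->
  setmul (generated W) (lcs N) x.
Proof.
have groupWN := setmul_subgroup (generated_subgroup W) (lcs_subgroup N) (@lcs_conj_closed N).
split=> -[a [b [Ha Hb ->]]].
- have /(generated_min groupWN) :
      sub_set (fun x => W x \/ lcs N x) (setmul (generated W) (lcs N)).
    move=> y [Wy | Ny].
      by exists y, 1; rewrite mulg1; split; [apply: generatedS | apply: group1 (lcs_subgroup N) |].
    by exists 1, y; rewrite mul1g; split; [apply: generated1 | |].
  move=> /(_ a (commg_lcs_sub_W Ha)) [a' [b' [Ha' Hb' ->]]].
  exists a', (b' * b); split => //; last by rewrite mulgA.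
  exact: (groupM (lcs_subgroup N) Hb' Hb).
- exists a, b; split => //; move: a Ha; apply: generated_min; first exact: generated_subgroup.
  move=> _ [t [s [[bt bs lst] [le_t le_s _ ->]]]]; apply: generatedS.
  exists (cval t), (cval s); split => //.
  + by apply: lcs_sub le_t _ (cval_lcs t).
  + by apply: lcs_sub le_s _ (cval_lcs s).
Qed.
End CommutatorOfTerms.
End Collection.
End GroupTheory.

Section FreeGroupModel.
Variable m : nat.
Implicit Types (l : letter m) (u v w r : word m).

Definition inverse_letters l l' := (l'.1 == l.1) && (l'.2 != l.2).
Definition reduced w := sorted (fun l l' => ~~ inverse_letters l l') w.
Definition linv l : letter m := (l.1, ~~ l.2).

Lemma push_reduced l w : reduced w -> reduced (push l w).
Proof.
case: w => [//|l' w] /= Hw; case: ifP => [_|/negbT Hll']; first exact: path_sorted Hw.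
by rewrite /reduced /= {1}/inverse_letters Hll'.
Qed.

Lemma reduce_reduced w : reduced (reduce w).
Proof. by elim: w => //= l w; apply: push_reduced. Qed.

Lemma reduce_id w : reduced w -> reduce w = w.
Proof.
elim: w => //= l w IHw Hw; rewrite IHw; last exact: path_sorted Hw.
by case: w Hw {IHw} => //= l' w /andP[+ _]; rewrite /inverse_letters => /negbTE ->.
Qed.

Lemma push_linv l w : reduced w -> push l (push (linv l) w) = w.
Proof.
case: l => i b; case: w => [|[j b'] w] Hw; first by rewrite /= eqxx; case: b.
rewrite /linv /=; case: (j =P i) => [Eji|Nji] /=; last by rewrite eqxx; case: b.
subst j; case: b b' Hw => [] [] //= Hw; rewrite ?eqxx //=;
  case: w Hw => //= l w /andP[+ _]; rewrite /inverse_letters /= => /negbTE -> //.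
Qed.

Definition act u r := foldr (@push m) r u.

Lemma reduce_cat u v : reduce (u ++ v) = act u (reduce v).
Proof. exact: foldr_cat. Qed.

Lemma act_reduced u r : reduced r -> reduced (act u r).
Proof. by elim: u => //= l u IHu Hr; apply/push_reduced/IHu. Qed.

Lemma act_push l u r : reduced r -> act (push l u) r = push l (act u r).
Proof.
case: u => [//|l' u] /= Hr; case: ifP => // /andP[/eqP E1 E2].
have -> : l' = linv l by case: l l' E1 E2 => [i b] [j b'] /= ->; case: b b' => [] [].
by rewrite push_linv //; apply: act_reduced.
Qed.

Lemma act_reduce u r : reduced r -> act (reduce u) r = act u r.
Proof. by move=> Hr; elim: u => // l u IHu; rewrite [reduce _]/= act_push // IHu. Qed.

Lemma fgmulA u v w : fgmul (fgmul u v) w = fgmul u (fgmul v w).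
Proof.
rewrite /fgmul [LHS]reduce_cat act_reduce ?reduce_reduced //.
by rewrite [RHS]reduce_cat (reduce_id (reduce_reduced (v ++ w))) reduce_cat /act foldr_cat.
Qed.

Lemma fginv_act u r : reduced r -> act (fginv u) (act u r) = r.
Proof.
elim: u r => //= l u IHu r Hr.
rewrite /fginv map_cons rev_cons -cats1 /act foldr_cat /= -/(linv l).
rewrite -{2}[l](_ : linv (linv l) = l) ?push_linv ?act_reduced //; first exact: IHu.
by case: l => i b; rewrite /linv negbK.
Qed.

Lemma fginvK u : fginv (fginv u) = u.
Proof. by rewrite /fginv map_rev revK -map_comp map_id_in // => -[i b] _ /=; rewrite negbK. Qed.

Lemma fginv_reduced u : reduced u -> reduced (fginv u).
Proof.
rewrite /reduced /fginv rev_sorted sorted_map; apply: sub_sorted => l l'.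
by rewrite /inverse_letters /= eq_sym; case: l.2; case: l'.2.
Qed.
End FreeGroupModel.

Definition fgroup m := {w : word m | reduced w}.
HB.instance Definition _ m := Choice.on (fgroup m).

Section FreeGroupInstance.
Variable m : nat.
Implicit Types a b : fgroup m.

Definition fgroup_elt w (Hw : reduced w) : fgroup m := exist _ w Hw.

Definition fgroup_one : fgroup m := exist _ [::] isT.
Definition fgroup_inv a : fgroup m := exist _ (fginv (val a)) (fginv_reduced (valP a)).
Definition fgroup_mul a b : fgroup m :=
  exist _ (fgmul (val a) (val b)) (reduce_reduced _).

Lemma fgroup_mulA : associative fgroup_mul.
Proof. by move=> a b c; apply: val_inj; rewrite /= fgmulA. Qed.

Lemma fgroup_mul1g : left_id fgroup_one fgroup_mul.
Proof. by move=> a; apply: val_inj; rewrite /= /fgmul reduce_id ?(valP a). Qed.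

Lemma fgroup_mulg1 : right_id fgroup_one fgroup_mul.
Proof. by move=> a; apply: val_inj; rewrite /= /fgmul cats0 reduce_id ?(valP a). Qed.

Lemma fgroup_mulVg : left_inverse fgroup_one fgroup_inv fgroup_mul.
Proof.
move=> a; apply: val_inj; rewrite /= /fgmul reduce_cat (reduce_id (valP a)).
by rewrite -[X in act _ X](reduce_id (valP a)) fginv_act.
Qed.

Lemma fgroup_mulgV : right_inverse fgroup_one fgroup_inv fgroup_mul.
Proof.
move=> a; apply: val_inj; rewrite /= /fgmul reduce_cat.
by rewrite -{1}[sval a]fginvK fginv_act.
Qed.

HB.instance Definition _ := isGroup.Build (fgroup m)
  fgroup_mulA fgroup_mul1g fgroup_mulg1 fgroup_mulVg fgroup_mulgV.

End FreeGroupInstance.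

Section Transfer.
Variable m : nat.
Local Open Scope group_scope.
Implicit Types (A B S : fgset m) (AG BG SG : fgroup m -> Prop).

Definition represents A AG :=
  (forall w, A w -> reduced w) /\ (forall g : fgroup m, A (val g) <-> AG g).

Lemma represents_eq A B AG BG : represents A AG -> represents B BG ->
  (forall g, AG g <-> BG g) -> fgset_eq A B.
Proof.
move=> [redA AGE] [redB BGE] ABG w; split=> [Aw | Bw].
- by have /AGE/ABG/BGE : A (val (fgroup_elt (redA w Aw))) by [].
- by have /BGE/ABG/AGE : B (val (fgroup_elt (redB w Bw))) by [].
Qed.

Lemma fgspan_reduced S w : fgspan S w -> reduced w.
Proof.
elim=> // [s _|u _|u v _ _ _ _]; [exact: reduce_reduced | exact: fginv_reduced |].
exact: reduce_reduced.
Qed.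

Lemma represents_fgspan S SG :
  (forall g : fgroup m, (exists s, S s /\ reduce s = val g) <-> SG g) ->
  represents (fgspan S) (generated SG).
Proof.
move=> SGE; split=> [|g]; first exact: fgspan_reduced.
split=> [Sg | ].
- suff: forall w (Hw : reduced w), fgspan S w -> generated SG (fgroup_elt Hw).
    by move/(_ _ (valP g) Sg); rewrite (_ : fgroup_elt _ = g) //; apply: val_inj.
  move=> w Hw Sw; elim: Sw Hw => [|s Ss|u Su IHu|u v Su IHu Sv IHv] Hw.
  + have -> : fgroup_elt Hw = 1 by apply: val_inj.
    exact: generated1.
  + by apply/generatedS/SGE; exists s.
  + have -> : fgroup_elt Hw = (fgroup_elt (fgspan_reduced Su))^-1 by apply: val_inj.
    exact/generatedV/IHu.
  + have -> : fgroup_elt Hw = fgroup_elt (fgspan_reduced Su) * fgroup_elt (fgspan_reduced Sv).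
      exact: val_inj.
    by apply: generatedM; [apply: IHu | apply: IHv].
- elim=> [|h /SGE[s [Ss <-]]|u _ IHu|u v _ IHu _ IHv] /=.
  + exact: span1.
  + exact: spanS.
  + exact: spanV.
  + exact: spanM.
Qed.

Lemma represents_Ftot : represents (@Ftot m) (fun _ => True).
Proof.
split=> [|g]; first exact: fgspan_reduced.
by split=> // _; rewrite -(reduce_id (valP g)); apply: spanS.
Qed.

Lemma val_commg (a b : fgroup m) : val [~ a, b] = fgcomm (val a) (val b).
Proof. by rewrite /commg /conjg mulgA. Qed.

Lemma represents_fgcommg A B AG BG : represents A AG -> represents B BG ->
  represents (fgcommg A B) (commg_set AG BG).
Proof.
move=> [redA AGE] [redB BGE]; apply: represents_fgspan => g; split.
- move=> [_ [[a [b [Aa Bb ->]]] red_ab]].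
  exists (fgroup_elt (redA a Aa)), (fgroup_elt (redB b Bb)); split.
  + exact/AGE.
  + exact/BGE.
  + by apply: val_inj; rewrite val_commg -red_ab reduce_id ?reduce_reduced.
- move=> [a [b [AGa BGb ->]]]; exists (val [~ a, b]); split.
    by exists (val a), (val b); rewrite val_commg; split; [apply/AGE | apply/BGE |].
  exact: reduce_id (valP _).
Qed.

Lemma represents_gamma k : represents (@gamma m k) (lcs k).
Proof.
elim: k => [|[|k] IHk]; try exact: represents_Ftot.
exact: represents_fgcommg IHk represents_Ftot.
Qed.

Lemma represents_fgsetmul A B AG BG : represents A AG -> represents B BG ->
  represents (fgsetmul A B) (setmul AG BG).
Proof.
move=> [redA AGE] [redB BGE]; split=> [_ [a [b [_ _ ->]]]|g]; first exact: reduce_reduced.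
split=> [[a [b [Aa Bb Eg]]] | [a [b [AGa BGb ->]]]].
- exists (fgroup_elt (redA a Aa)), (fgroup_elt (redB b Bb)); split.
  + exact/AGE.
  + exact/BGE.
  + exact: val_inj.
- by exists (val a), (val b); split; [apply/AGE | apply/BGE |].
Qed.

Definition fgen (i : 'I_m) : fgroup m := exist _ (fggen i) isT.

Lemma val_cval t : val (cval fgen t) = ceval t.
Proof. by elim: t => // b IHb a IHa; rewrite /= -IHb -IHa; apply: val_commg. Qed.

Lemma represents_Wset lt c n : represents (fgspan (Wset lt c n)) (generated (W fgen lt c n)).
Proof.
apply: represents_fgspan => g; split.
- move=> [_ [[b [a [bas [le_b le_a le_ba ->]]]] red_ba]].
  exists b, a; split=> //; split=> //; apply: val_inj.
  by rewrite val_cval -red_ba reduce_id ?reduce_reduced.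
- move=> [b [a [bas [le_b le_a le_ba ->]]]]; exists (ceval (Node b a)); split.
    by exists b, a.
  by rewrite -val_cval; apply: reduce_id (valP _).
Qed.

Lemma fgroup_generated (g : fgroup m) : generated (fun x => exists i, x = fgen i) g.
Proof.
case: g => w; elim: w => [|[i b] w IHw] Hw; rewrite -/(fgroup_elt Hw).
  have -> : fgroup_elt Hw = 1 by apply: val_inj.
  exact: generated1.
have -> : fgroup_elt Hw = (if b then (fgen i)^-1 else fgen i) * fgroup_elt (path_sorted Hw).
  by apply: val_inj; case: b Hw => Hw; rewrite /= /fgmul reduce_id.
apply: generatedM; last exact: IHw.
by case: b {Hw}; [apply: generatedV |]; apply: generatedS; exists i.
Qed.
End Transfer.

Theorem lemma2p5 (m : nat) (lt : ctree m -> ctree m -> Prop) (n c : nat) :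
  (1 <= n)%N -> (1 <= c)%N -> (n - 1 <= c)%N ->
  basic_order lt ->
  fgset_eq
    (fgsetmul (fgcommg (@gamma m (c + n + 1)) (@gamma m (c + 1))) (@gamma m (2 * c + 2 * n + 2)))
    (fgsetmul (fgspan (Wset lt c n)) (@gamma m (2 * c + 2 * n + 2))).
Proof.
move=> n_gt0 c_gt0 n_le_c lt_basic.
have lcsR k := @represents_gamma m k.
apply: (represents_eq (represents_fgsetmul (represents_fgcommg (lcsR _) (lcsR _)) (lcsR _))
                      (represents_fgsetmul (represents_Wset lt c n) (lcsR _))).
exact: (setmul_commg_lcs lt_basic (@fgroup_generated m) n_gt0 c_gt0 n_le_c).
Qed.
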